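(* Let $f=c_1\wedge\cdots\wedge c_m$ be a Boolean formula over the variables $x_1,\dots,x_n$, where each clause $c_j$ is a CNF clause, a cardinality constraint, an XOR clause, or a NAE clause. Let $F_f=\sum_{j=1}^m \mathrm{FE}_{c_j}$, viewed as a real polynomial on $[-1,1]^n$. Then $f$ is satisfiable if and only if $\min_{x\in[-1,1]^n}F_f(x)=-m$.
   Context: Boolean values are encoded as $\pm1$, with $-1$ standing for True and $+1$ for False; a negated literal $\neg x_i$ corresponds to $-x_i$. The clause types are as follows. - A CNF clause is a disjunction of literals. - A cardinality constraint $D^{\ge k}(L)$ (respectively $D^{\le k}(L)$) on a set $L$ of variables requires at least (respectively at most) $k$ of them to be True. - An XOR clause requires an odd number of its variables to be True. - A NAE clause requires that not all of its variables take the same value. Each clause $c$ is a function $\{\pm1\}^n\to\{\pm1\}$, with value $-1$ exactly when $c$ is satisfied. $\mathrm{FE}_c$ denotes its Fourier expansion: the unique multilinear polynomial $\sum_{S\subseteq[n]}\widehat c(S)\prod_{i\in S}x_i$ that agrees with $c$ on $\{\pm1\}^n$, where $\widehat c(S)=\mathbb{E}_{x\sim\{\pm1\}^n}[c(x)\prod_{i\in S}x_i]$. *)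

From HB Require Import structures.
From mathcomp Require Import all_boot all_order all_algebra.
From mathcomp Require Import reals.
Set Implicit Arguments. Unset Strict Implicit. Unset Printing Implicit Defensive.
Import Order.TTheory GRing.Theory Num.Theory.
Local Open Scope ring_scope.

(* A Boolean assignment: a i = true means x_i is True (encoded as -1). *)
Definition assignment (n : nat) := {ffun 'I_n -> bool}.

Definition pm1 {R : ringType} (b : bool) : R := if b then -1 else 1.

(* A literal (i, neg): the variable x_i if neg = false, its negation if neg = true. *)
Definition literal (n : nat) := ('I_n * bool)%type.
Definition lit_true n (a : assignment n) (l : literal n) : bool := a l.1 != l.2.

Inductive clause (n : nat) : Type :=
| CNF of seq (literal n)
| AtLeast of nat & {set 'I_n}
| AtMost of nat & {set 'I_n}
| XOR of {set 'I_n}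
| NAE of {set 'I_n}.

Definition num_true n (a : assignment n) (L : {set 'I_n}) : nat :=
  #|[set i in L | a i]|.

Definition clause_sat n (c : clause n) (a : assignment n) : bool :=
  match c with
  | CNF ls => has (lit_true a) ls
  | AtLeast k L => (k <= num_true a L)%N
  | AtMost k L => (num_true a L <= k)%N
  | XOR L => odd (num_true a L)
  | NAE L => [exists i in L, a i] && [exists i in L, ~~ a i]
  end.

Definition clause_val {R : ringType} n (c : clause n) (a : assignment n) : R :=
  pm1 (clause_sat c a).

Definition fourier_coef {R : fieldType} n (c : clause n) (S : {set 'I_n}) : R :=
  (2 ^ n)%:R^-1 *
  \sum_(a : assignment n) clause_val c a * \prod_(i in S) pm1 (a i).

Definition FE {R : fieldType} n (c : clause n) (x : 'I_n -> R) : R :=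
  \sum_(S : {set 'I_n}) fourier_coef c S * \prod_(i in S) x i.

Definition F_f {R : fieldType} n (f : seq (clause n)) (x : 'I_n -> R) : R :=
  \sum_(c <- f) FE c x.

Definition satisfiable n (f : seq (clause n)) : Prop :=
  exists a : assignment n, all (fun c => clause_sat c a) f.

Definition in_cube {R : realType} n (x : 'I_n -> R) : Prop :=
  forall i, -1 <= x i <= 1.

From HB Require Import structures.
From mathcomp Require Import all_boot all_order all_algebra.
From mathcomp Require Import reals ring lra.
Set Implicit Arguments. Unset Strict Implicit. Unset Printing Implicit Defensive.
Import Order.TTheory GRing.Theory Num.Theory.
Local Open Scope ring_scope.

(* For x in the cube, cube_weight a x = prod_i (1 + a_i x_i) / 2 is the law of a
   random assignment a whose coordinates are independent with mean x_i.  Since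
   the Fourier expansion is multilinear and E[prod_(i in S) a_i] = prod_(i in S) x_i,
   FE_c(x) is the expectation of c(a), i.e. FE_c(x) = 2 Pr[c is violated] - 1 >= -1.
   Hence F_f(x) >= -m, with equality only if every assignment of positive
   probability satisfies f; the sign pattern of x is one of them.  Conversely a
   satisfying assignment, viewed as a vertex of the cube, gives F_f = -m. *)

Lemma sum_prod_subsets (R : comPzSemiRingType) (I : finType) (y : I -> R) :
  \sum_(S : {set I}) \prod_(i in S) y i = \prod_i (y i + 1).
Proof. by rewrite bigA_distr; apply: eq_bigr => S _; rewrite big_mkcond. Qed.

(* [psumr_eq0] needs an eqType of indices, and [clause n] is not one. *)
Lemma psumr_eq0_seq (R : numDomainType) (T : Type) (r : seq T) (F : T -> R) :
  (forall t, 0 <= F t) -> (\sum_(t <- r) F t == 0) = all (fun t => F t == 0) r.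
Proof.
move=> F_ge0; elim: r => [|t r IHr] /=; first by rewrite big_nil eqxx.
by rewrite big_cons paddr_eq0 ?IHr //; apply: sumr_ge0.
Qed.

Definition cube_weight {R : fieldType} n (a : assignment n) (x : 'I_n -> R) : R :=
  \prod_i ((1 + pm1 (a i) * x i) / 2).

Definition vertex {R : nzRingType} n (a : assignment n) : 'I_n -> R :=
  fun i => pm1 (a i).

Definition sign_assignment {R : realFieldType} n (x : 'I_n -> R) : assignment n :=
  [ffun i => x i < 0].

Lemma FE_cube_weight (R : fieldType) n (c : clause n) (x : 'I_n -> R) :
  FE c x = \sum_a clause_val c a * cube_weight a x.
Proof.
rewrite /FE /fourier_coef.
under eq_bigr => S _ do rewrite big_distrr /= big_distrl /=.
rewrite exchange_big /=; apply: eq_bigr => a _.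
have -> : cube_weight a x = (2 ^ n)%:R^-1 * \prod_i (pm1 (a i) * x i + 1).
  rewrite /cube_weight big_split /= prodr_const card_ord mulrC natrX exprVn.
  by congr (_ * _); apply: eq_bigr => i _; rewrite addrC.
rewrite -sum_prod_subsets !big_distrr /=; apply: eq_bigr => S _.
by rewrite big_split /=; ring.
Qed.

Section CubeWeights.
Variables (R : realFieldType) (n : nat).
Implicit Types (a : assignment n) (x : 'I_n -> R).

Lemma pm1_mul_pm1 (b b' : bool) : pm1 b * pm1 b' = pm1 (b != b') :> R.
Proof. by case: b; case: b'; rewrite /pm1 /= ?mulrNN ?mulrN ?mulNr mulr1. Qed.

Lemma cube_weight_ge0 a x : (forall i, -1 <= x i <= 1) -> 0 <= cube_weight a x.
Proof.
move=> hx; apply: prodr_ge0 => i _; have /andP[? ?] := hx i.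
by rewrite /pm1; case: (a i); rewrite ?mulN1r ?mul1r; lra.
Qed.

Lemma cube_weight_sign_gt0 x :
  (forall i, -1 <= x i <= 1) -> 0 < cube_weight (sign_assignment x) x.
Proof.
move=> hx; apply: prodr_gt0 => i _; have /andP[? ?] := hx i.
by rewrite ffunE /pm1; case: (ltrP (x i) 0) => ?; rewrite ?mulN1r ?mul1r; lra.
Qed.

Lemma sum_cube_weight x : \sum_a cube_weight a x = 1.
Proof.
rewrite -(bigA_distr_bigA (fun i (b : bool) => (1 + pm1 b * x i) / 2)) /=.
by apply: big1 => i _; rewrite big_bool /pm1 /=; lra.
Qed.

Lemma cube_weight_vertex a a' : cube_weight a (vertex a') = (a == a')%:R :> R.
Proof.
have pm1_factor (b : bool) : (1 + pm1 b) / 2 = (~~ b)%:R :> R.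
  by case: b; rewrite /pm1 /=; lra.
rewrite /cube_weight /vertex.
under eq_bigr => i _ do rewrite pm1_mul_pm1 pm1_factor negbK.
rewrite -natr_prod; congr _%:R; case: eqP => [<-|neq_aa'].
  by apply: big1 => i _; rewrite eqxx.
have [i neq_i] : exists i, a i != a' i.
  apply/existsP; rewrite -negb_forall; apply: contra_notN neq_aa'.
  by move=> /forallP eq_aa'; apply/ffunP => i; apply/eqP.
by rewrite (bigD1 i) //= (negbTE neq_i).
Qed.

Lemma vertex_in_cube a i : -1 <= (vertex a i : R) <= 1.
Proof. by rewrite /vertex /pm1; case: (a i); apply/andP; split; lra. Qed.

Variable c : clause n.

Lemma FE_vertex a : FE c (vertex a) = clause_val c a :> R.
Proof.
rewrite FE_cube_weight (bigD1 a) //= cube_weight_vertex eqxx mulr1 big1 ?addr0 //.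
by move=> a' neq_a'a; rewrite cube_weight_vertex (negbTE neq_a'a) mulr0.
Qed.

Lemma FE_violation_mass x :
  FE c x = 2 * \sum_(a | ~~ clause_sat c a) cube_weight a x - 1.
Proof.
rewrite FE_cube_weight -[X in _ - X](sum_cube_weight x) [X in 2 * X]big_mkcond.
rewrite mulr_sumr -sumrB; apply: eq_bigr => a _.
by rewrite /clause_val /pm1; case: clause_sat => /=; lra.
Qed.

Lemma FE_ge_N1 x : (forall i, -1 <= x i <= 1) -> -1 <= FE c x.
Proof.
move=> x_cube; rewrite FE_violation_mass.
have : 0 <= \sum_(a | ~~ clause_sat c a) cube_weight a x.
  by apply: sumr_ge0 => a _; apply: cube_weight_ge0.
lra.
Qed.

Lemma FE_eqN1_sat_sign x :
  (forall i, -1 <= x i <= 1) -> FE c x = -1 -> clause_sat c (sign_assignment x).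
Proof.
move=> x_cube; rewrite FE_violation_mass => FE_N1.
have violation0 : \sum_(a | ~~ clause_sat c a) cube_weight a x = 0 by lra.
apply: contraT => violated; have := cube_weight_sign_gt0 x_cube.
by rewrite (psumr_eq0P _ violation0) ?ltxx // => a _; apply: cube_weight_ge0.
Qed.

End CubeWeights.

Section ClauseSums.
Variables (R : realFieldType) (n : nat) (f : seq (clause n)).

Lemma F_f_add_size (x : 'I_n -> R) :
  F_f f x + (size f)%:R = \sum_(c <- f) (FE c x + 1).
Proof. by rewrite /F_f big_split /= -sum1_size natr_sum. Qed.

Lemma F_f_ge (x : 'I_n -> R) :
  (forall i, -1 <= x i <= 1) -> - (size f)%:R <= F_f f x.
Proof.
move=> x_cube; rewrite -subr_ge0 opprK F_f_add_size.
by apply: sumr_ge0 => c _; have := FE_ge_N1 c x_cube; lra.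
Qed.

Lemma F_f_min_sat_sign (x : 'I_n -> R) :
  (forall i, -1 <= x i <= 1) -> F_f f x = - (size f)%:R ->
  all (fun c => clause_sat c (sign_assignment x)) f.
Proof.
move=> x_cube F_min.
have : \sum_(c <- f) (FE c x + 1) == 0 by rewrite -F_f_add_size F_min addNr.
rewrite psumr_eq0_seq => [|c]; last by have := FE_ge_N1 c x_cube; lra.
apply: sub_all => c /eqP FE_N1; apply: FE_eqN1_sat_sign x_cube _; lra.
Qed.

Lemma F_f_vertex_sat (a : assignment n) :
  all (fun c => clause_sat c a) f -> F_f f (vertex a) = - (size f)%:R :> R.
Proof.
move=> f_sat; apply/eqP; rewrite -subr_eq0 opprK F_f_add_size psumr_eq0_seq.
  by apply: sub_all f_sat => c c_sat; rewrite FE_vertex /clause_val c_sat /pm1 addNr.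
move=> c; rewrite FE_vertex /clause_val /pm1.
by case: clause_sat; rewrite ?addNr ?addr_ge0.
Qed.

End ClauseSums.

Theorem theorem2 (R : realType) (n : nat) (f : seq (clause n)) :
  satisfiable f <->
  ((exists x : 'I_n -> R, in_cube x /\ F_f f x = - (size f)%:R) /\
   (forall x : 'I_n -> R, in_cube x -> - (size f)%:R <= F_f f x)).
Proof.
split=> [[a f_sat] | [[x [x_cube F_min]] _]].
  split=> [|x]; last exact: F_f_ge.
  by exists (vertex a); split; [exact: vertex_in_cube | exact: F_f_vertex_sat].
by exists (sign_assignment x); apply: F_f_min_sat_sign F_min.
Qed.
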